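(* Let $n\ge2$ and let $a_1,\dots,a_{n-1}\in\mathbb C$ be fixed. For $a\in\mathbb C$ set $h_a(z)=z^n+a_{n-1}z^{n-1}+a^n$ and $f_a(z)=z^n+a_{n-1}z^{n-1}+\cdots+a_1z+a^n$. Then $$\lim_{|a|\to+\infty}d_F\bigl(Z(h_a),Z(f_a)\bigr)=0.$$
   Context: $Z(f)$ denotes the roots of $f$ counted with multiplicity. For multisets $A=\{u_1,\dots,u_m\}$, $B=\{v_1,\dots,v_m\}$ in $\mathbb C$, $d_F(A,B)=\min_{\sigma}\max_k|u_k-v_{\sigma(k)}|$ over permutations $\sigma$ of $\{1,\dots,m\}$. *)

(* The complex numbers C are modelled by an arbitrary
   numClosedFieldType (algebraically closed field with a norm). *)
From HB Require Import structures.
From mathcomp Require Import all_boot all_order all_algebra all_fingroup.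
Set Implicit Arguments. Unset Strict Implicit. Unset Printing Implicit Defensive.
Import Order.TTheory GRing.Theory Num.Theory.
Local Open Scope ring_scope.

(* s is the multiset of roots Z(p), counted with multiplicity, of the monic p *)
Definition is_roots (C : numClosedFieldType) (p : {poly C}) (s : seq C) : Prop :=
  p = \prod_(x <- s) ('X - x%:P).

Definition dF_perm (C : numClosedFieldType) (u v : seq C) (sigma : 'S_(size u)) : C :=
  \big[Num.max/0]_(k < size u) `|u`_k - v`_(sigma k)|.

(* Matching distance d_F(A,B) = min_sigma max_k |u_k - v_{sigma(k)}|
   (minimum over all permutations; seeded with the identity permutation,
   which is itself among the sigma's, so this is exactly the minimum). *)
Definition dF (C : numClosedFieldType) (u v : seq C) : C :=
  \big[Num.min/@dF_perm C u v 1%g]_(sigma : 'S_(size u)) @dF_perm C u v sigma.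

Definition f_poly (C : numClosedFieldType) (n : nat) (c : nat -> C) (a : C) : {poly C} :=
  'X^n + (\sum_(1 <= i < n) (c i *: 'X^i)) + (a ^+ n)%:P.

Definition h_poly (C : numClosedFieldType) (n : nat) (c : nat -> C) (a : C) : {poly C} :=
  'X^n + c n.-1 *: 'X^(n.-1) + (a ^+ n)%:P.

(* Write A = |a| and K = |a_0| + ... + |a_{n-1}|.  Every root of h_a or f_a
   lies in the disc |z| < 2A (a Cauchy bound), so on that disc the lower
   order parts of h_a and f_a are O(A^{n-1}).  The proof compares root
   multisets with a matching lemma: if points R_i are 2H-separated and two
   families R, S satisfy |prod_i (S_j - R_i)| < eps H^{n-1} and
   |prod_j (R_i - S_j)| < eps H^{n-1}, then some permutation sigma puts
   every S_{sigma k} within eps of R_k.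
   1. With rho_i the n-th roots of -1, the points a rho_i are 4dA-separated
      for a fixed d > 0, and matching (eps = dA, H = 2dA) places the roots
      of h_a within dA of them; hence the roots of h_a are 2dA-separated.
   2. h_a and f_a differ by a polynomial of degree n-2, of size O(A^{n-2})
      on the disc, so matching (H = dA) pairs the roots of f_a with those
      of h_a within any fixed eps once A is large; this bounds d_F. *)
From HB Require Import structures.
From mathcomp Require Import all_boot all_order all_algebra all_fingroup.
From mathcomp Require Import separable ring.
Import Order.TTheory GRing.Theory Num.Theory.
Local Open Scope ring_scope.
Set Implicit Arguments. Unset Strict Implicit.

Definition eventually (C : numClosedFieldType) (P : C -> Prop) : Prop :=
  exists M : C, 0 <= M /\ forall a : C, M < `|a| -> P a.

Section Eventually.
Variable C : numClosedFieldType.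
Implicit Types (P Q : C -> Prop).

Lemma eventually_gt (b : C) : 0 <= b -> eventually (fun a => b < `|a|).
Proof. by move=> b_ge0; exists b. Qed.

Lemma eventually_and P Q :
  eventually P -> eventually Q -> eventually (fun a => P a /\ Q a).
Proof.
move=> [M [M_ge0 HP]] [N [N_ge0 HQ]]; exists (M + N); split; first exact: addr_ge0.
move=> a MN_lt; split; [apply: HP | apply: HQ]; apply: le_lt_trans MN_lt.
- by rewrite lerDl.
- by rewrite lerDr.
Qed.

Lemma eventually_mono P Q :
  (forall a, P a -> Q a) -> eventually P -> eventually Q.
Proof. by move=> PQ [M [M_ge0 HP]]; exists M; split=> // a /HP /PQ. Qed.

Lemma eventually_dominated (k : nat) (K Q : C) : 0 <= K -> 0 < Q ->
  eventually (fun a => K * (2%:R * `|a|) ^+ k < Q * `|a| ^+ k.+1).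
Proof.
move=> K_ge0 Q_gt0; have M_ge0 : 0 <= K * 2%:R ^+ k / Q.
  by apply: divr_ge0 (ltW Q_gt0); apply: mulr_ge0 K_ge0 (exprn_ge0 _ _).
exists (K * 2%:R ^+ k / Q); split => // a lt_a.
have a_gt0 : 0 < `|a| := le_lt_trans M_ge0 lt_a.
move: lt_a; rewrite ltr_pdivrMr // => lt_a.
rewrite exprMn mulrA exprS mulrA (mulrC Q).
by rewrite ltr_pM2r // exprn_gt0.
Qed.

End Eventually.

Section RealBounds.
Variable C : numClosedFieldType.

Lemma prod_ge_pick (I : finType) (F : I -> C) (i0 : I) (b B : C) :
  0 <= b -> b <= F i0 -> 0 <= B -> (forall i, i != i0 -> B <= F i) ->
  b * B ^+ #|I|.-1 <= \prod_i F i.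
Proof.
move=> b_ge0 b_le B_ge0 B_le; rewrite (bigD1 i0) //= -(cardC1 i0) -prodr_const.
apply: ler_pM => //; first exact: prodr_ge0.
by apply: ler_prod => i i_neq; rewrite B_ge0 B_le.
Qed.

Lemma bigmin_le_real (I : eqType) (r : seq I) (x0 : C) (F : I -> C) (j : I) :
  x0 \is Num.real -> (forall i, F i \is Num.real) -> j \in r ->
  \big[Num.min/x0]_(i <- r) F i <= F j.
Proof.
move=> x0_real F_real; elim: r => // i r IH; rewrite inE big_cons.
have min_real : \big[Num.min/x0]_(i <- r) F i \is Num.real by exact: bigmin_real.
rewrite comparable_ge_min ?real_comparable //.
by case/predU1P => [->|/IH ->]; rewrite ?lexx ?orbT.
Qed.

End RealBounds.

Lemma dF_lt_of_matching (C : numClosedFieldType) (u v : seq C) (n : nat) (eps : C) :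
  size u = n -> 0 < eps ->
  (exists sigma : 'S_n, forall k : 'I_n, `|u`_k - v`_(sigma k)| < eps) ->
  dF u v < eps.
Proof.
move=> <- eps_gt0 [sigma near].
have perm_real s : @dF_perm C u v s \is Num.real.
  by apply: bigmax_real => // k _; exact: normr_real.
apply: le_lt_trans (_ : @dF_perm C u v sigma < eps).
  by apply: bigmin_le_real => //; exact: mem_index_enum.
rewrite /dF_perm; apply: (big_ind (fun x => x < eps)) => // x y xe ye.
by rewrite /Order.max; case: ifP.
Qed.

Section Matching.
Variables (C : numClosedFieldType) (n : nat) (R S : 'I_n -> C) (eps H : C).
Hypotheses (eps_gt0 : 0 < eps) (eps_le_H : eps <= H).
Hypothesis R_sep : forall i j, i != j -> H *+ 2 <= `|R i - R j|.
Hypothesis S_prod : forall j, \prod_i `|S j - R i| < eps * H ^+ n.-1.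
Hypothesis R_prod : forall i, \prod_j `|R i - S j| < eps * H ^+ n.-1.

Let H_ge0 : 0 <= H. Proof. exact: le_trans (ltW eps_gt0) eps_le_H. Qed.

Let real_nlt {x y : C} : 0 <= x -> 0 <= y -> ~~ (x < y) -> y <= x.
Proof. by move=> x_ge0 y_ge0; rewrite real_leNgt ?ger0_real. Qed.

Lemma far_from_others i i' j :
  i != i' -> `|S j - R i| < H -> H <= `|S j - R i'|.
Proof.
move=> ii' close; apply: real_nlt => //; apply/negP => close'.
have : `|R i - R i'| < H *+ 2.
  apply: le_lt_trans (ler_distD (S j) _ _) _.
  by rewrite mulr2n distrC ltrD.
by rewrite real_ltNge ?ger0_real ?mulrn_wge0 // R_sep.
Qed.

Lemma near_some_R j : exists i, `|S j - R i| < eps.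
Proof.
case: (boolP [exists i, `|S j - R i| < eps]) => [/existsP //|/existsPn far].
have far_eps i : eps <= `|S j - R i| := real_nlt (normr_ge0 _) (ltW eps_gt0) (far i).
have [i0 far_others] : exists i0, forall i, i != i0 -> H <= `|S j - R i|.
  case: (pickP (fun i => `|S j - R i| < H)) => [i1 close|none].
    by exists i1 => i ii1; apply: far_from_others close; rewrite eq_sym.
  by exists j => i _; apply: real_nlt => //; rewrite none.
have := prod_ge_pick (ltW eps_gt0) (far_eps i0) H_ge0 far_others.
rewrite card_ord => prod_ge.
by have := lt_le_trans (S_prod j) prod_ge; rewrite ltxx.
Qed.

Lemma near_some_S i : exists j, `|R i - S j| < eps.
Proof.
case: (boolP [exists j, `|R i - S j| < eps]) => [/existsP //|/existsPn far].
have far_eps j : eps <= `|R i - S j| := real_nlt (normr_ge0 _) (ltW eps_gt0) (far j).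
have far_all j : H <= `|R i - S j|.
  have [i' close] := near_some_R j; case: (eqVneq i' i) => [i'_eq|i'i].
    by move: (far j); rewrite distrC -i'_eq close.
  by rewrite distrC; apply: far_from_others i'i (lt_le_trans close eps_le_H).
have := prod_ge_pick (ltW eps_gt0) (far_eps i) H_ge0 (fun j _ => far_all j).
rewrite card_ord => prod_ge.
by have := lt_le_trans (R_prod i) prod_ge; rewrite ltxx.
Qed.

Lemma matching : exists sigma : 'S_n, forall k, `|R k - S (sigma k)| < eps.
Proof.
pose sg i := xchoose (near_some_S i).
have sgP i : `|R i - S (sg i)| < eps := xchooseP (near_some_S i).
have sg_inj : injective sg.
  move=> i1 i2 sg12; apply/eqP; apply: contraT => i12.
  have close1 : `|S (sg i1) - R i1| < H by rewrite distrC (lt_le_trans (sgP i1)).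
  have := far_from_others i12 close1; rewrite sg12 distrC.
  by rewrite real_leNgt ?ger0_real // (lt_le_trans (sgP i2)).
by exists (perm sg_inj) => k; rewrite permE.
Qed.

End Matching.

Lemma separation_transfer (C : numClosedFieldType) (n : nat)
    (R S : 'I_n -> C) (sigma : 'S_n) (e : C) :
  (forall i j, i != j -> e *+ 4 <= `|R i - R j|) ->
  (forall k, `|R k - S (sigma k)| < e) ->
  forall i j, i != j -> e *+ 2 <= `|S i - S j|.
Proof.
move=> R_sep near i j ij.
have near' k : `|R ((sigma^-1)%g k) - S k| < e by rewrite -{2}(permKV sigma k).
have ij' : (sigma^-1)%g i != (sigma^-1)%g j by rewrite (inj_eq perm_inj).
have : e *+ 2 + e *+ 2 < e *+ 2 + `|S i - S j|.
  rewrite -mulrnDr; apply: le_lt_trans (R_sep _ _ ij') _.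
  apply: le_lt_trans (ler_distD (S i) _ _) _; rewrite mulr2n -addrA.
  apply: ltrD (near' i) _; apply: le_lt_trans (ler_distD (S j) _ _) _.
  by rewrite [e + _]addrC ltrD2l distrC.
by rewrite ltrD2l => /ltW.
Qed.

Section RootsOfMinusOne.
Variable C : numClosedFieldType.

(* X^n + 1 has simple roots when n is invertible, by the Bezout identity
   (X^n + 1) - (X / n) (n X^(n-1)) = 1 with its derivative. *)
Lemma separable_Xn_add1 (F : fieldType) (n : nat) :
  n%:R != 0 :> F -> separable_poly ('X^n + 1%:P : {poly F}).
Proof.
move=> n_neq0; rewrite unlock; apply/Bezout_coprimepP.
exists (1, - n%:R^-1 *: 'X) => /=.
have n_gt0 : (0 < n)%N by rewrite lt0n; apply: contraNneq n_neq0 => ->.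
rewrite derivD derivXn derivC addr0 mul1r -scalerAl mulrnAr -exprS prednK //.
rewrite -scaler_nat scalerA mulNr mulVf // scaleN1r.
by rewrite addrC addKr eqpxx.
Qed.

Lemma roots_Xn_add1 (n : nat) : (0 < n)%N -> exists rho : 'I_n -> C,
  [/\ injective rho, forall z, z ^+ n + 1 = \prod_i (z - rho i)
    & forall i, rho i ^+ n = -1].
Proof.
move=> n_gt0; have [r def_p] := closed_field_poly_normal ('X^n + 1%:P : {poly C}).
rewrite (monicP (monicXnaddC 1 n_gt0)) scale1r in def_p.
have size_r : size r = n.
  by have := congr1 (fun p : {poly C} => size p) def_p; rewrite size_XnaddC // size_prod_XsubC => -[].
have uniq_r : uniq r.
  by rewrite -separable_prod_XsubC -def_p separable_Xn_add1 // pnatr_eq0 -lt0n.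
have eval_r z : z ^+ n + 1 = \prod_(i < n) (z - r`_i).
  have := congr1 (horner^~ z) def_p; rewrite /= !hornerE horner_prod => ->.
  rewrite (big_nth 0) big_mkord size_r.
  by apply: eq_bigr => i _; rewrite hornerXsubC.
exists (fun i => r`_i); split => //.
- move=> i j /eqP; rewrite nth_uniq ?size_r // => /eqP; exact: val_inj.
- move=> i; apply/eqP; rewrite -subr_eq0 opprK eval_r.
  by apply/prodf_eq0; exists i; rewrite ?subrr.
Qed.

Lemma norm_root_neg1 (n : nat) (z : C) : (0 < n)%N -> z ^+ n = -1 -> `|z| = 1.
Proof.
move=> n_gt0 z_pow; have := congr1 Num.norm z_pow; rewrite normrX normrN normr1 => /eqP.
by rewrite pexpr_eq1 // => /eqP.
Qed.

Lemma scaled_roots (n : nat) (rho : 'I_n -> C) (a z : C) : a != 0 ->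
  (forall z, z ^+ n + 1 = \prod_i (z - rho i)) ->
  z ^+ n + a ^+ n = \prod_i (z - a * rho i).
Proof.
move=> a_neq0 rho_prod.
have -> : z ^+ n + a ^+ n = a ^+ n * ((z / a) ^+ n + 1).
  by rewrite mulrDr mulr1 exprMn exprVn mulrCA divff ?mulr1 ?expf_neq0.
rewrite rho_prod -[in a ^+ n](card_ord n) -prodr_const -big_split /=.
by apply: eq_bigr => i _; rewrite mulrBr mulrCA divff ?mulr1.
Qed.

Lemma injective_separated (n : nat) (R : 'I_n -> C) : injective R ->
  exists2 d : C, 0 < d & forall i j, i != j -> d <= `|R i - R j|.
Proof.
move=> R_inj.
pose T := \sum_i \sum_(j | i != j) `|R i - R j|^-1.
have T_ge0 : 0 <= T by apply: sumr_ge0 => i _; apply: sumr_ge0 => j _; rewrite invr_ge0.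
exists (1 + T)^-1; first by rewrite invr_gt0 ltr_pwDl.
move=> i j ij.
have dist_gt0 : 0 < `|R i - R j| by rewrite normr_gt0 subr_eq0 (inj_eq R_inj).
have inv_le : `|R i - R j|^-1 <= T.
  rewrite /T (bigD1 i) //= (bigD1 j) //= -addrA lerDl addr_ge0 //.
    by apply: sumr_ge0 => k _; rewrite invr_ge0.
  by apply: sumr_ge0 => k _; apply: sumr_ge0 => l _; rewrite invr_ge0.
rewrite -[X in _ <= X]invrK ler_pV2 ?inE ?unitfE ?invr_gt0 ?gt_eqF ?ltr_pwDl //.
  by apply: le_trans inv_le _; rewrite lerDr.
by rewrite invr_gt0.
Qed.

Lemma scaled_separation (n : nat) (rho : 'I_n -> C) (a d : C) :
  (forall i j, i != j -> d *+ 4 <= `|rho i - rho j|) ->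
  forall i j, i != j -> (d * `|a|) *+ 4 <= `|a * rho i - a * rho j|.
Proof.
move=> rho_sep i j ij; rewrite -mulrBr normrM -mulrnAl mulrC.
by apply: ler_wpM2l => //; exact: rho_sep.
Qed.

End RootsOfMinusOne.

Section RootSequences.
Variable C : numClosedFieldType.
Implicit Types (p : {poly C}) (s : seq C).

Lemma is_roots_norm_horner p s z :
  is_roots p s -> `|p.[z]| = \prod_(i < size s) `|z - s`_i|.
Proof.
move=> ->; rewrite horner_prod normr_prod (big_nth 0) big_mkord.
by apply: eq_bigr => i _; rewrite hornerXsubC.
Qed.

Lemma is_roots_size p s : is_roots p s -> size s = (size p).-1.
Proof. by move=> ->; rewrite size_prod_XsubC. Qed.

Lemma is_roots_root p s i : is_roots p s -> (i < size s)%N -> p.[s`_i] = 0.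
Proof.
move=> roots_s i_lt; apply/eqP; rewrite -normr_eq0 (is_roots_norm_horner _ roots_s).
by apply/prodf_eq0; exists (Ordinal i_lt); rewrite //= subrr normr0.
Qed.

End RootSequences.

Lemma size_Xn_add (R : nzRingType) (n : nat) (q : {poly R}) :
  (size q <= n)%N -> size ('X^n + q) = n.+1.
Proof. by move=> q_le; rewrite size_polyDl size_polyXn. Qed.

Lemma root_norm_bound (C : numClosedFieldType) (n : nat) (K a w q : C) :
  (2 <= n)%N -> 1 <= `|a| -> K <= `|a| -> w ^+ n + q + a ^+ n = 0 ->
  (1 <= `|w| -> `|q| <= K * `|w| ^+ n.-1) -> `|w| < 2%:R * `|a|.
Proof.
move=> n_ge2 a_ge1 K_le root_w q_le.
set x := `|w|; set A := `|a| in a_ge1 K_le *.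
have A_gt0 : 0 < A by apply: lt_le_trans a_ge1; rewrite ltr01.
rewrite real_ltNge ?realM ?normr_real ?ger0_real //; apply/negP => Ax.
have Ax' : A < x by apply: lt_le_trans Ax; rewrite ltr_pMl // ltr1n.
have x_ge1 : 1 <= x by apply: le_trans a_ge1 (ltW Ax').
have x_ge0 : 0 <= x := le_trans ler01 x_ge1.
have n_gt0 : (0 < n)%N by apply: ltnW.
have upper : x ^+ n <= K * x ^+ n.-1 + A ^+ n.
  have w_pow : w ^+ n = - (q + a ^+ n) by rewrite -(subr0 (w ^+ n)) -root_w; ring.
  rewrite /x -normrX w_pow normrN.
  by apply: le_trans (ler_normD _ _) _; rewrite normrX lerD2r q_le.
have lower : K * x ^+ n.-1 + A ^+ n < x ^+ n.
  rewrite -(prednK n_gt0) !exprS prednK //.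
  have -> : x * x ^+ n.-1 = (x - A) * x ^+ n.-1 + A * x ^+ n.-1.
    by rewrite -mulrDl subrK.
  apply: ler_ltD.
    apply: ler_wpM2r; first exact: exprn_ge0 x_ge0.
    by apply: le_trans K_le _; rewrite lerBrDl -mulr2n -[A *+ 2]mulr_natl.
  by rewrite ltr_pM2l // ltrXn2r ?ltW // -lt0n -ltnS prednK.
by have := lt_le_trans lower upper; rewrite ltxx.
Qed.

Section Estimates.
Variables (C : numClosedFieldType) (n : nat) (c : nat -> C).
Hypothesis n_ge2 : (2 <= n)%N.

Let n_gt0 : (0 < n)%N. Proof. exact: ltnW. Qed.

Let K : C := \sum_(0 <= i < n) `|c i|.

Let K_ge0 : 0 <= K. Proof. exact: sumr_ge0. Qed.

Lemma tail_norm (l u : nat) (z B : C) : (u <= n)%N -> 1 <= B -> `|z| <= B ->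
  `|\sum_(l <= i < u) c i * z ^+ i| <= K * B ^+ u.-1.
Proof.
move=> u_le B_ge1 z_le; have B_ge0 : 0 <= B := le_trans ler01 B_ge1.
have coef_le : \sum_(l <= i < u) `|c i| <= K.
  case: (leqP l u) => [lu|ul]; last by rewrite big_geq ?(ltnW ul).
  rewrite /K (big_cat_nat (leq0n l) (leq_trans lu u_le)) (big_cat_nat lu u_le) /=.
  by rewrite addrCA lerDl addr_ge0 ?sumr_ge0.
apply: le_trans (ler_norm_sum _ _ _) _.
apply: le_trans (ler_wpM2r (exprn_ge0 _ B_ge0) coef_le); rewrite mulr_suml.
rewrite big_nat_cond [X in _ <= X]big_nat_cond; apply: ler_sum => i /andP[/andP[_ iu] _].
rewrite normrM normrX ler_wpM2l //; apply: le_trans (ler_weXn2l B_ge1 _).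
  by apply: lerXn2r; rewrite ?nnegrE.
by rewrite -ltnS prednK // (leq_ltn_trans _ iu).
Qed.

Lemma horner_h (a z : C) :
  (h_poly n c a).[z] = z ^+ n + \sum_(n.-1 <= i < n) c i * z ^+ i + a ^+ n.
Proof.
rewrite /h_poly !hornerE.
by case: n n_ge2 => // m _; rewrite big_nat1.
Qed.

Lemma horner_f (a z : C) :
  (f_poly n c a).[z] = z ^+ n + \sum_(1 <= i < n) c i * z ^+ i + a ^+ n.
Proof.
rewrite /f_poly !hornerE horner_sum.
by under eq_bigr do rewrite hornerZ hornerXn.
Qed.

Lemma horner_f_h (a z : C) :
  (f_poly n c a).[z] = (h_poly n c a).[z] + \sum_(1 <= i < n.-1) c i * z ^+ i.
Proof.
have n1_ge1 : (1 <= n.-1)%N by rewrite -ltnS prednK.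
rewrite horner_f horner_h (big_cat_nat n1_ge1 (leq_pred n)) /=; ring.
Qed.

Lemma h_roots_size (a : C) zh : is_roots (h_poly n c a) zh -> size zh = n.
Proof.
move/is_roots_size => ->; rewrite /h_poly -addrA size_Xn_add //.
apply: leq_trans (size_polyD _ _) _; rewrite geq_max.
rewrite (leq_trans (size_polyC_leq1 _) n_gt0) andbT.
by apply: leq_trans (size_scale_leq _ _) _; rewrite size_polyXn prednK.
Qed.

Lemma f_roots_size (a : C) zf : is_roots (f_poly n c a) zf -> size zf = n.
Proof.
move/is_roots_size => ->; rewrite /f_poly -addrA size_Xn_add //.
apply: leq_trans (size_polyD _ _) _; rewrite geq_max.
rewrite (leq_trans (size_polyC_leq1 _) n_gt0) andbT.
rewrite big_nat_cond; apply: (big_ind (fun p : {poly C} => size p <= n)%N).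
- by rewrite size_poly0.
- by move=> p q p_le q_le; apply: leq_trans (size_polyD _ _) _; rewrite geq_max p_le.
- move=> i /andP[/andP[_ i_lt] _].
  by apply: leq_trans (size_scale_leq _ _) _; rewrite size_polyXn.
Qed.

Section LargeModulus.
Variable a : C.
Hypotheses (a_ge1 : 1 <= `|a|) (K_le_a : K <= `|a|).

Lemma roots_in_disc (p : {poly C}) (l : nat) s :
  (forall z, p.[z] = z ^+ n + \sum_(l <= i < n) c i * z ^+ i + a ^+ n) ->
  is_roots p s -> forall i, (i < size s)%N -> `|s`_i| < 2%:R * `|a|.
Proof.
move=> p_eval roots_s i i_lt.
apply: (root_norm_bound (q := \sum_(l <= k < n) c k * s`_i ^+ k)) n_ge2 a_ge1 K_le_a _ _.
  by rewrite -p_eval (is_roots_root roots_s).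
by move=> w_ge1; apply: tail_norm.
Qed.

Let A_gt0 : 0 < `|a|. Proof. exact: lt_le_trans ltr01 a_ge1. Qed.
Let disc_ge1 : 1 <= 2%:R * `|a|.
Proof. by apply: le_trans a_ge1 _; rewrite ler_peMl ?ler1n. Qed.

Lemma h_roots_near_scaled (rho : 'I_n -> C) (d : C) zh :
  (forall z, z ^+ n + 1 = \prod_i (z - rho i)) -> (forall i, rho i ^+ n = -1) ->
  0 < d -> (forall i j, i != j -> d *+ 4 <= `|rho i - rho j|) ->
  K * (2%:R * `|a|) ^+ n.-1 < d * (d *+ 2) ^+ n.-1 * `|a| ^+ n.-1.+1 ->
  is_roots (h_poly n c a) zh ->
  exists sigma : 'S_n, forall k, `|a * rho k - zh`_(sigma k)| < d * `|a|.
Proof.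
move=> rho_prod rho_pow d_gt0 rho_sep dominated roots_h.
have size_zh := h_roots_size roots_h.
have a_neq0 : a != 0 by rewrite -normr_gt0.
have bound : K * (2%:R * `|a|) ^+ n.-1 < d * `|a| * (d *+ 2 * `|a|) ^+ n.-1.
  suff -> : d * `|a| * (d *+ 2 * `|a|) ^+ n.-1 =
    d * (d *+ 2) ^+ n.-1 * `|a| ^+ n.-1.+1 by [].
  by rewrite exprS exprMn; ring.
apply: (matching (R := fun i => a * rho i) (S := fun j => zh`_j) (H := d *+ 2 * `|a|)).
- by rewrite mulr_gt0.
- by rewrite ler_wpM2r // mulr2n lerDl ltW.
- by move=> i j ij; rewrite -mulrnAl -mulrnA mulrnAl; apply: scaled_separation.
- move=> j; rewrite -normr_prod -scaled_roots //.
  have root_j : (h_poly n c a).[zh`_j] = 0 by rewrite is_roots_root ?size_zh.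
  move: root_j; rewrite horner_h addrAC => /eqP; rewrite addr_eq0 => /eqP ->.
  rewrite normrN; apply: le_lt_trans bound; apply: tail_norm => //.
  by apply: ltW; apply: (roots_in_disc (horner_h a) roots_h); rewrite size_zh.
- move=> i; move: (is_roots_norm_horner (a * rho i) roots_h); rewrite size_zh => <-.
  rewrite horner_h exprMn rho_pow mulrN1 addrAC addNr add0r.
  apply: le_lt_trans bound; apply: tail_norm => //.
  rewrite normrM (norm_root_neg1 n_gt0 (rho_pow i)) mulr1.
  by rewrite ler_peMl ?ler1n.
Qed.

Lemma f_roots_near_h_roots (d eps : C) zh zf :
  0 < eps -> eps <= d * `|a| ->
  K * (2%:R * `|a|) ^+ n.-2 < eps * d ^+ n.-1 * `|a| ^+ n.-2.+1 ->
  is_roots (h_poly n c a) zh -> is_roots (f_poly n c a) zf ->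
  (forall i j : 'I_n, i != j -> (d * `|a|) *+ 2 <= `|zh`_i - zh`_j|) ->
  exists sigma : 'S_n, forall k : 'I_n, `|zh`_k - zf`_(sigma k)| < eps.
Proof.
move=> eps_gt0 eps_le dominated roots_h roots_f zh_sep.
have size_zh := h_roots_size roots_h; have size_zf := f_roots_size roots_f.
have n1_le : (n.-1 <= n)%N := leq_pred n.
have bound : K * (2%:R * `|a|) ^+ n.-2 < eps * (d * `|a|) ^+ n.-1.
  suff -> : eps * (d * `|a|) ^+ n.-1 = eps * d ^+ n.-1 * `|a| ^+ n.-2.+1 by [].
  have n1_gt0 : (0 < n.-1)%N by rewrite -ltnS prednK.
  by rewrite (prednK n1_gt0) exprMn; ring.
apply: (matching (R := fun i => zh`_i) (S := fun j => zf`_j) (H := d * `|a|)) => //.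
- move=> j; move: (is_roots_norm_horner zf`_j roots_h); rewrite size_zh => <-.
  have root_j : (f_poly n c a).[zf`_j] = 0 by rewrite is_roots_root ?size_zf.
  move: root_j; rewrite horner_f_h => /eqP; rewrite addr_eq0 => /eqP ->.
  rewrite normrN; apply: le_lt_trans bound; apply: tail_norm => //.
  by apply: ltW; apply: (roots_in_disc (horner_f a) roots_f); rewrite size_zf.
- move=> i; move: (is_roots_norm_horner zh`_i roots_f); rewrite size_zf => <-.
  rewrite horner_f_h is_roots_root ?size_zh // add0r.
  apply: le_lt_trans bound; apply: tail_norm => //.
  by apply: ltW; apply: (roots_in_disc (horner_h a) roots_h); rewrite size_zh.
Qed.

End LargeModulus.

Lemma eventually_base : eventually (fun a : C => 1 <= `|a| /\ K <= `|a|).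
Proof.
apply: eventually_mono (eventually_gt (addr_ge0 ler01 K_ge0)) => a lt_a.
by split; apply: ltW; apply: le_lt_trans lt_a; rewrite ?lerDl ?lerDr.
Qed.

Lemma h_roots_separated : exists2 d : C, 0 < d & eventually (fun a =>
  forall zh, is_roots (h_poly n c a) zh ->
  forall i j : 'I_n, i != j -> (d * `|a|) *+ 2 <= `|zh`_i - zh`_j|).
Proof.
have [rho [rho_inj rho_prod rho_pow]] := roots_Xn_add1 C n_gt0.
have [d0 d0_gt0 rho_sep0] := injective_separated rho_inj.
pose d := d0 / 4%:R; have d_gt0 : 0 < d by rewrite divr_gt0.
have rho_sep i j : i != j -> d *+ 4 <= `|rho i - rho j|.
  by rewrite -mulr_natr divfK ?pnatr_eq0 //; exact: rho_sep0.
have Q_gt0 : 0 < d * (d *+ 2) ^+ n.-1 by rewrite mulr_gt0 ?exprn_gt0 ?mulrn_wgt0.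
exists d => //; apply: eventually_mono
  (eventually_and eventually_base (eventually_dominated n.-1 K_ge0 Q_gt0)).
move=> a [[a_ge1 K_le_a] dominated] zh roots_h.
have [sigma near] := h_roots_near_scaled a_ge1 K_le_a rho_prod rho_pow d_gt0
  rho_sep dominated roots_h.
by apply: separation_transfer near => i j ij; apply: scaled_separation.
Qed.

Lemma f_roots_match_h_roots (d eps : C) : 0 < d -> 0 < eps ->
  eventually (fun a => forall zh zf,
    is_roots (h_poly n c a) zh -> is_roots (f_poly n c a) zf ->
    (forall i j : 'I_n, i != j -> (d * `|a|) *+ 2 <= `|zh`_i - zh`_j|) ->
    exists sigma : 'S_n, forall k : 'I_n, `|zh`_k - zf`_(sigma k)| < eps).
Proof.
move=> d_gt0 eps_gt0.
have Q_gt0 : 0 < eps * d ^+ n.-1 by rewrite mulr_gt0 ?exprn_gt0.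
have eps_small := eventually_dominated 0 (ltW eps_gt0) d_gt0.
have dominated := eventually_dominated n.-2 K_ge0 Q_gt0.
apply: eventually_mono (eventually_and eventually_base
  (eventually_and eps_small dominated)) => a [[a_ge1 K_le_a] [eps_lt dom]].
move=> zh zf; apply: f_roots_near_h_roots => //.
by apply: ltW; move: eps_lt; rewrite expr0 expr1 mulr1 mulrC.
Qed.

End Estimates.

Theorem corollary4p7 (C : numClosedFieldType) (n : nat) (c : nat -> C) :
  (2 <= n)%N ->
  forall eps : C, 0 < eps ->
  exists M : C, 0 <= M /\
    forall a : C, M < `|a| ->
    forall zh zf : seq C,
      is_roots (h_poly n c a) zh -> is_roots (f_poly n c a) zf ->
      dF zh zf < eps.
Proof.
move=> n_ge2 eps eps_gt0.
have [d d_gt0 zh_sep] := h_roots_separated c n_ge2.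
have zf_near := f_roots_match_h_roots c n_ge2 d_gt0 eps_gt0.
have [M [M_ge0 large]] := eventually_and zh_sep zf_near.
exists M; split => // a lt_a zh zf roots_h roots_f.
have [sep near] := large a lt_a.
apply: dF_lt_of_matching (h_roots_size n_ge2 roots_h) eps_gt0 _.
exact: near (sep zh roots_h).
Qed.
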